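(* Let $(L,\preceq)$ be a lattice with meet $\wedge$ and join $\vee$, and let $\delta$ be an equivalence relation on $L$. Then $\delta$ is a local congruence on $L$ if and only if, for all $a,b,c\in L$, the following two properties hold: (i) if $(a,b)\in\delta$ and $a\preceq c\preceq b$, then $(a,c)\in\delta$; (ii) $(a,b)\in\delta$ if and only if $(a\wedge b,\,a\vee b)\in\delta$.
   Context: For an equivalence relation $\delta$ on a set $L$, $[a]_\delta=\{b\in L\mid (a,b)\in\delta\}$ denotes the equivalence class of $a$. Given a lattice $(L,\preceq)$, an equivalence relation $\delta$ on $L$ is called a local congruence if (i) each equivalence class of $\delta$ is a sublattice of $L$ (closed under $\wedge$ and $\vee$ of $L$), and (ii) each equivalence class of $\delta$ is convex (if $x,y$ belong to the class and $x\preceq z\preceq y$ with $z\in L$, then $z$ belongs to the class). *)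

From mathcomp Require Import all_boot all_order.
Set Implicit Arguments. Unset Strict Implicit. Unset Printing Implicit Defensive.
Import Order.Theory.
Local Open Scope order_scope.

Definition is_equivalence (T : Type) (delta : T -> T -> Prop) : Prop :=
  (forall x, delta x x) /\ (forall x y, delta x y -> delta y x) /\
  (forall x y z, delta x y -> delta y z -> delta x z).

Definition eq_class (T : Type) (delta : T -> T -> Prop) (a : T) : T -> Prop :=
  fun b => delta a b.

Definition is_sublattice d (L : latticeType d) (S : L -> Prop) : Prop :=
  forall x y, S x -> S y -> S (x `&` y) /\ S (x `|` y).

Definition is_convex d (L : latticeType d) (S : L -> Prop) : Prop :=
  forall x y z, S x -> S y -> x <= z -> z <= y -> S z.

Definition local_congruence d (L : latticeType d) (delta : L -> L -> Prop) : Prop :=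
  is_equivalence delta /\
  (forall a, is_sublattice (eq_class delta a)) /\
  (forall a, is_convex (eq_class delta a)).

From mathcomp Require Import all_boot all_order.
Set Implicit Arguments. Unset Strict Implicit. Unset Printing Implicit Defensive.
Import Order.Theory.
Local Open Scope order_scope.

(* For an equivalence, convexity of every class says exactly that each pair
   (a, b) in delta with a <= b carries the whole interval [a, b].  Since
   a `&` b <= a, b <= a `|` b, this interval closure makes (a `&` b, a `|` b)
   in delta equivalent to (a, b) in delta, and it turns classes into
   sublattices: x, y in a class force x `&` y ~ x and x `&` y ~ x `|` y. *)

Section LocalCongruence.

Variables (d : Order.disp_t) (L : latticeType d) (delta : L -> L -> Prop).
Hypothesis delta_refl : forall x, delta x x.
Hypothesis delta_sym : forall x y, delta x y -> delta y x.
Hypothesis delta_trans : forall x y z, delta x y -> delta y z -> delta x z.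

Definition interval_closed : Prop :=
  forall a b c, delta a b -> a <= c -> c <= b -> delta a c.

Lemma convex_classesP :
  (forall a, is_convex (eq_class delta a)) <-> interval_closed.
Proof.
split=> [Hcv a b c Hab | Hint a x y z Hax Hay Hxz Hzy].
  exact: Hcv (delta_refl a) Hab.
have Hxy : delta x y by exact: delta_trans (delta_sym Hax) Hay.
exact: delta_trans Hax (Hint _ _ _ Hxy Hxz Hzy).
Qed.

Lemma delta_meet_join_of_sublattice_classes (a b : L) :
  (forall x, is_sublattice (eq_class delta x)) ->
  delta a b -> delta (a `&` b) (a `|` b).
Proof.
move=> Hsub Hab; have [Hmeet Hjoin] := Hsub a a b (delta_refl a) Hab.
exact: delta_trans (delta_sym Hmeet) Hjoin.
Qed.

Hypothesis delta_interval : interval_closed.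

Lemma delta_meetl_of_meet_join (a b : L) :
  delta (a `&` b) (a `|` b) -> delta (a `&` b) a.
Proof. by move=> Hmj; apply: delta_interval Hmj (leIl a b) (leUl a b). Qed.

Lemma delta_of_meet_join (a b : L) :
  delta (a `&` b) (a `|` b) -> delta a b.
Proof.
move=> Hmj; have Hba : delta (b `&` a) (b `|` a) by rewrite meetC joinC.
apply: delta_trans (delta_sym (delta_meetl_of_meet_join Hmj)) _.
rewrite meetC; exact: delta_meetl_of_meet_join Hba.
Qed.

Lemma sublattice_classes :
  (forall a b, delta a b -> delta (a `&` b) (a `|` b)) ->
  forall a, is_sublattice (eq_class delta a).
Proof.
move=> Hmj a x y Hax Hay.
have Hxy_mj := Hmj x y (delta_trans (delta_sym Hax) Hay).
have Hax_meet : delta a (x `&` y).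
  exact: delta_trans Hax (delta_sym (delta_meetl_of_meet_join Hxy_mj)).
by split; last exact: delta_trans Hax_meet Hxy_mj.
Qed.

End LocalCongruence.

Theorem proposition3p4 (d : Order.disp_t) (L : latticeType d) (delta : L -> L -> Prop)
  (Hdelta : is_equivalence delta) :
  local_congruence delta <->
  (forall a b c : L,
     (delta a b -> a <= c -> c <= b -> delta a c) /\
     (delta a b <-> delta (a `&` b) (a `|` b))).
Proof.
have [refl [sym trans]] := Hdelta.
split=> [[_ [Hsub Hcv]] a b c | H].
  have Hint := proj1 (convex_classesP refl sym trans) Hcv.
  split; first exact: Hint.
  split; first exact: delta_meet_join_of_sublattice_classes.
  exact: delta_of_meet_join.
have Hint : interval_closed delta by move=> a b c; apply: (proj1 (H a b c)).
split=> //; split; last exact/(convex_classesP refl sym trans).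
by apply: sublattice_classes => // a b /(proj2 (H a b a)).
Qed.
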